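(* Consider $n$ parallel roads (indexed by $i\in[n]$) shared by $m$ vehicle types (indexed by $j\in[m]$), vehicle type $j$ having demand $\bar f^j\ge0$. A feasible routing is $f=(f^j_i)$ with $f^j_i\ge0$ and $\sum_i f^j_i=\bar f^j$ for each $j$. Road $i$ has latency $\ell_i(f)=b_i+\sum_j a^j_i f^j_i$ with constants $a^j_i\ge0$, $b_i\ge0$, and the social cost is $J(f)=\sum_i\big(\sum_j f^j_i\big)\ell_i(f)$. Then there exists a feasible routing $f$ minimizing $J$ such that no two distinct vehicle types $j\neq j'$ share more than one road with positive flow of both, i.e. there are no two distinct roads $i\neq i'$ with $f^j_i,f^{j'}_i,f^j_{i'},f^{j'}_{i'}>0$.
   Context: Parallel-road network with multiple vehicle types, affine road latencies with type-dependent coefficients, and social cost equal to total latency. *)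

From mathcomp Require Import all_boot all_order all_algebra.
From mathcomp Require Import reals.
Set Implicit Arguments. Unset Strict Implicit. Unset Printing Implicit Defensive.
Import Order.TTheory GRing.Theory Num.Theory.
Local Open Scope ring_scope.

(* A routing: f j i = flow of vehicle type j on road i. *)
Definition routing (R : realType) (n m : nat) := 'I_m -> 'I_n -> R.

Definition feasible (R : realType) (n m : nat) (fbar : 'I_m -> R)
  (f : routing R n m) : Prop :=
  (forall j i, 0 <= f j i) /\ (forall j, \sum_(i < n) f j i = fbar j).

Definition latency (R : realType) (n m : nat) (a : 'I_m -> 'I_n -> R)
  (b : 'I_n -> R) (f : routing R n m) (i : 'I_n) : R :=
  b i + \sum_(j < m) a j i * f j i.

Definition social_cost (R : realType) (n m : nat) (a : 'I_m -> 'I_n -> R)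
  (b : 'I_n -> R) (f : routing R n m) : R :=
  \sum_(i < n) (\sum_(j < m) f j i) * latency a b f i.

(* A minimizer of J exists because the feasible routings form a compact set
   (a closed subset of a product of segments) on which J is continuous.
   Suppose a minimizer has types j <> j' both positive on roads i <> i'.
   Moving e units of type j from road i to road i', and e units of type j'
   from road i' to road i, leaves the total flow of every road unchanged; as
   each latency is affine, J is then affine in e.  Possibly exchanging j and
   j', its slope is nonpositive, and the largest admissible e empties one of
   the four cells without making any cell positive that was not already so.
   The result is a minimizer with strictly smaller support, so a minimizer of
   smallest support has the required property. *)

From mathcomp Require Import all_boot all_order all_algebra.
From mathcomp Require Import reals.
From mathcomp Require Import boolp classical_sets topology normedtype derive.
From mathcomp Require Import lra ring.
Set Implicit Arguments. Unset Strict Implicit. Unset Printing Implicit Defensive.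
Import Order.TTheory GRing.Theory Num.Theory.
Import numFieldNormedType.Exports.
Local Open Scope ring_scope.

Lemma sumr_indicator (R : nzSemiRingType) (T : finType) (x : T) :
  \sum_(y : T) ((y == x)%:R : R) = 1.
Proof. by rewrite (bigD1 x) //= eqxx big1 ?addr0 // => y /negbTE ->. Qed.

Section Rerouting.
Variables (R : realType) (n m : nat) (fbar : 'I_m -> R).
Variables (a : 'I_m -> 'I_n -> R) (b : 'I_n -> R).
Implicit Types (f g d : routing R n m) (e : R) (j k : 'I_m) (i l : 'I_n).

Definition road_flow f i := \sum_(j < m) f j i.

Definition reroute f d e : routing R n m := fun j i => f j i + e * d j i.

Definition cost_slope f d :=
  \sum_(i < n) road_flow f i * \sum_(j < m) a j i * d j i.

Lemma social_cost_reroute f d e : (forall i, road_flow d i = 0) ->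
  social_cost a b (reroute f d e) = social_cost a b f + e * cost_slope f d.
Proof.
move=> d_flow0; rewrite /social_cost /cost_slope mulr_sumr -big_split /=.
apply: eq_bigr => i _.
have -> : \sum_j reroute f d e j i = road_flow f i.
  by rewrite big_split /= -mulr_sumr [X in e * X]d_flow0 mulr0 addr0.
have -> : latency a b (reroute f d e) i =
          latency a b f i + e * \sum_j a j i * d j i.
  rewrite /latency /reroute mulr_sumr -addrA -big_split /=.
  by congr (_ + _); apply: eq_bigr => j _; ring.
rewrite /road_flow; ring.
Qed.

Lemma feasible_reroute f d e : feasible fbar f ->
  (forall j, \sum_(i < n) d j i = 0) -> (forall j i, 0 <= reroute f d e j i) ->
  feasible fbar (reroute f d e).
Proof.
move=> [_ f_sum] d_sum0 ge0; split=> // j.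
by rewrite big_split /= -mulr_sumr d_sum0 mulr0 addr0 f_sum.
Qed.

Definition swap_cycle j (j' : 'I_m) i (i' : 'I_n) : routing R n m :=
  fun k l => ((k == j)%:R - (k == j')%:R) * ((l == i')%:R - (l == i)%:R).

Lemma swap_cycle_row_sum j (j' : 'I_m) i (i' : 'I_n) k :
  \sum_(l < n) swap_cycle j j' i i' k l = 0.
Proof. by rewrite -mulr_sumr sumrB !sumr_indicator subrr mulr0. Qed.

Lemma swap_cycle_road_flow j (j' : 'I_m) i (i' : 'I_n) l :
  road_flow (swap_cycle j j' i i') l = 0.
Proof. by rewrite /road_flow -mulr_suml sumrB !sumr_indicator subrr mul0r. Qed.

Lemma cost_slope_swap_cycleC f j (j' : 'I_m) i (i' : 'I_n) :
  cost_slope f (swap_cycle j' j i i') = - cost_slope f (swap_cycle j j' i i').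
Proof.
rewrite /cost_slope -sumrN; apply: eq_bigr => l _; rewrite -mulrN -sumrN.
by congr (_ * _); apply: eq_bigr => k _; rewrite /swap_cycle; ring.
Qed.

Lemma swap_cycleE j (j' : 'I_m) i (i' : 'I_n) k l : j != j' -> i != i' ->
  swap_cycle j j' i i' k l =
    if ((k, l) == (j, i)) || ((k, l) == (j', i')) then -1
    else if ((k, l) == (j, i')) || ((k, l) == (j', i)) then 1 else 0.
Proof.
move=> /negbTE jj' /negbTE ii'; rewrite /swap_cycle !xpair_eqE.
have [-> | _] := eqVneq k j.
  rewrite jj' /=; have [-> | _] := eqVneq l i.
    by rewrite ii' /=; ring.
  by case: (l == i') => /=; ring.
have [_ | _] := eqVneq k j'.
  have [-> | _] := eqVneq l i.
    by rewrite ii' /=; ring.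
  by case: (l == i') => /=; ring.
by rewrite /=; ring.
Qed.

Definition flow_support f := [set p : 'I_m * 'I_n | 0 < f p.1 p.2].

Definition share_roads f j j' i i' :=
  [/\ 0 < f j i, 0 < f j' i, 0 < f j i' & 0 < f j' i'].

Lemma share_roadsC f j j' i i' :
  share_roads f j j' i i' -> share_roads f j' j i i'.
Proof. by case. Qed.

Lemma reroute_swap_cycle f j j' i i' : j != j' -> i != i' ->
  feasible fbar f -> share_roads f j j' i i' ->
  cost_slope f (swap_cycle j j' i i') <= 0 ->
  exists g, [/\ feasible fbar g, social_cost a b g <= social_cost a b f &
                (#|flow_support g| < #|flow_support f|)%N].
Proof.
move=> jj' ii' feas_f [fji fj'i fji' fj'i'] slope_le0.
pose e := Num.min (f j i) (f j' i').
have e_gt0 : 0 < e by rewrite lt_min fji.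
have e_le : e <= f j i /\ e <= f j' i' by rewrite !ge_min !lexx orbT.
have e_cell : e = f j i \/ e = f j' i'.
  by rewrite /e minEle; case: ifP; [left | right].
pose g := reroute f (swap_cycle j j' i i') e.
exists g; split.
- apply: feasible_reroute => // [k | k l]; first exact: swap_cycle_row_sum.
  have f_ge0 := feas_f.1 k l; rewrite /reroute swap_cycleE //.
  by case: ifP => [/orP[] /eqP[-> ->] | _]; [lra | lra | case: ifP => _; lra].
- rewrite social_cost_reroute; first by nra.
  exact: swap_cycle_road_flow.
- apply: proper_card; apply/fintype.properP; split.
    apply/fintype.subsetP => -[k l]; rewrite !inE /= /g /reroute swap_cycleE //.
    by case: ifP => _; [lra | case: ifP => [/orP[] /eqP[-> ->] | _] //; lra].
  case: e_cell => [e_ji | e_j'i'].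
    by exists (j, i); rewrite !inE //= /g /reroute swap_cycleE // eqxx /=; lra.
  exists (j', i'); rewrite !inE //= /g /reroute swap_cycleE // eqxx orbT /=.
  lra.
Qed.

Definition optimal_routing f := feasible fbar f /\
  forall g, feasible fbar g -> social_cost a b f <= social_cost a b g.

Definition at_most_one_shared_road f :=
  forall j j' i i', j != j' -> i != i' -> ~ share_roads f j j' i i'.

Lemma optimal_routing_shrink f j j' i i' : j != j' -> i != i' ->
  optimal_routing f -> share_roads f j j' i i' ->
  exists g, optimal_routing g /\ (#|flow_support g| < #|flow_support f|)%N.
Proof.
move=> jj' ii' [feas_f min_f] shared.
have [g [feas_g cost_g supp_g]] : exists g, [/\ feasible fbar g,
    social_cost a b g <= social_cost a b f &
    (#|flow_support g| < #|flow_support f|)%N].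
  have [slope_le0 | slope_gt0] := lerP (cost_slope f (swap_cycle j j' i i')) 0.
    exact: reroute_swap_cycle jj' ii' feas_f shared slope_le0.
  have j'j : j' != j by rewrite eq_sym.
  apply: (reroute_swap_cycle j'j ii' feas_f (share_roadsC shared)).
  by rewrite cost_slope_swap_cycleC oppr_le0 ltW.
by exists g; split=> //; split=> // h /min_f; apply: le_trans.
Qed.

Lemma optimal_routing_at_most_one_shared_road f : optimal_routing f ->
  exists g, optimal_routing g /\ at_most_one_shared_road g.
Proof.
have [k] := ubnP #|flow_support f|; elim: k f => // k IH f supp_f opt_f.
have [//|no_good] :=
  pselect (exists g, optimal_routing g /\ at_most_one_shared_road g).
exists f; split=> // j j' i i' jj' ii' shared.
have [g [opt_g supp_g]] := optimal_routing_shrink jj' ii' opt_f shared.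
by apply: no_good; apply: (IH g) => //; apply: leq_trans supp_g _.
Qed.

End Rerouting.

Local Open Scope classical_set_scope.

Section Existence.
Import ArrowAsProduct.

Lemma continuous_entry (I J : eqType) (T : topologicalType) (i : I) (j : J) :
  continuous (fun f : I -> J -> T => f i j).
Proof.
move=> f; pose row (g : I -> J -> T) := g i.
by apply: (@continuous_comp _ _ _ row (fun h => h j)); exact: proj_continuous.
Qed.
Arguments continuous_entry {I J T} i j.

Lemma continuous_sumr (K : numFieldType) (T : topologicalType) (I : Type)
    (r : seq I) (F : I -> T -> K) :
  (forall i, continuous (F i)) -> continuous (fun x => \sum_(i <- r) F i x).
Proof.
by move=> F_cont; apply: continuous_big => //; exact: add_continuous.
Qed.

Lemma continuous_mulr (K : numFieldType) (T : topologicalType) (s t : T -> K) :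
  continuous s -> continuous t -> continuous (fun x => s x * t x).
Proof. by move=> s_cont t_cont x; apply: continuousM (s_cont x) (t_cont x). Qed.

Variables (R : realType) (n m : nat) (fbar : 'I_m -> R).
Variables (a : 'I_m -> 'I_n -> R) (b : 'I_n -> R).

Lemma continuous_social_cost :
  continuous (social_cost a b : ('I_m -> 'I_n -> R) -> R).
Proof.
rewrite /social_cost /latency; apply: continuous_sumr => i.
apply: continuous_mulr.
  by apply: continuous_sumr => j; exact: continuous_entry.
move=> f; apply: continuousD; first exact: cst_continuous.
apply: continuous_sumr => j.
by apply: continuous_mulr; [exact: cst_continuous | exact: continuous_entry].
Qed.

Lemma closed_feasible : closed [set f : 'I_m -> 'I_n -> R | feasible fbar f].
Proof.
have -> : [set f : 'I_m -> 'I_n -> R | feasible fbar f] =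
    \bigcap_(p in [set: 'I_m * 'I_n]) [set f | 0 <= f p.1 p.2] `&`
    \bigcap_(j in [set: 'I_m]) [set f | \sum_(i < n) f j i = fbar j].
  apply/seteqP; split=> f /=.
    by case=> f_ge0 f_sum; split=> [[j i] _ | j _] /=.
  by case=> f_ge0 f_sum; split=> [j i | j]; [exact: (f_ge0 (j, i)) | exact: f_sum].
apply: closedI; apply: closed_bigI.
  move=> [j i] _.
  exact: preimage_closed (fun f _ => continuous_entry j i f) (@closed_ge _ 0).
move=> j _.
have sum_cont : continuous (fun f : 'I_m -> 'I_n -> R => \sum_(i < n) f j i).
  exact: continuous_sumr (continuous_entry j).
exact: preimage_closed (fun f _ => sum_cont f) (@closed_eq _ (fbar j)).
Qed.

Lemma compact_feasible : compact [set f : 'I_m -> 'I_n -> R | feasible fbar f].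
Proof.
have box_compact : compact [set f : 'I_m -> 'I_n -> R |
    forall j, [set g : 'I_n -> R | forall i, `[0, fbar j]%classic (g i)] (f j)].
  exact: tychonoff (fun j =>
    tychonoff (fun i : 'I_n => @segment_compact R 0 (fbar j))).
apply: subclosed_compact closed_feasible box_compact _ => f [f_ge0 f_sum] j i.
rewrite /= in_itv /= f_ge0 -(f_sum j) (bigD1 i) //= lerDl.
by apply: sumr_ge0 => k _.
Qed.

Lemma exists_optimal_routing : (exists f : routing R n m, feasible fbar f) ->
  exists f, optimal_routing fbar a b f.
Proof.
move=> [f0 feas_f0].
have [|f] := compact_EVT_min _ compact_feasible
  (continuous_subspaceT continuous_social_cost); first by exists f0.
rewrite inE => feas_f min_f; exists f; split=> // g feas_g.
by apply: min_f; rewrite inE.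
Qed.

End Existence.

Theorem corollary1 (R : realType) (n m : nat)
  (fbar : 'I_m -> R) (a : 'I_m -> 'I_n -> R) (b : 'I_n -> R)
  (hfbar : forall j, 0 <= fbar j)
  (ha : forall j i, 0 <= a j i) (hb : forall i, 0 <= b i)
  (hfeas : exists f : routing R n m, feasible fbar f) :
  exists f : routing R n m,
    [/\ feasible fbar f,
        (forall g : routing R n m, feasible fbar g ->
           social_cost a b f <= social_cost a b g) &
        (forall (j j' : 'I_m) (i i' : 'I_n), j != j' -> i != i' ->
           ~ [/\ 0 < f j i, 0 < f j' i, 0 < f j i' & 0 < f j' i'])].
Proof.
have [f0 opt_f0] := exists_optimal_routing a b hfeas.
have [f [[feas_f min_f] one_shared]] :=
  optimal_routing_at_most_one_shared_road opt_f0.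
by exists f.
Qed.
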